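(* For $n\ge 0$ let $\mathcal P(n,1,1)$ be the set of lattice paths with steps $(1,1)$ (up) and $(1,-1)$ (down) from $(0,0)$ to $(2n+1,1)$, and let $C_n=\frac{1}{n+1}\binom{2n}{n}$. Define formal power series $f,g,h$ by: - $x\,f(x,y)$ is the sum over all $n\ge0$ and all paths in $\mathcal P(n,1,1)$ starting with an up step of $x^{a}y^{b}$, where $a$ is the number of up steps starting on or below the $x$-axis and $b$ the number of up steps starting above the $x$-axis; - $x\,g(x,y)$ is the sum over all $n\ge0$ and all paths in $\mathcal P(n,1,1)$ starting with a down step of $x^{a}y^{b}$, where $a$ is the number of down steps starting on or below the $x$-axis and $b$ the number of down steps starting above the $x$-axis; - $y\,h(x,y)$ is the sum over all $n\ge0$ and all paths in $\mathcal P(n,1,1)$ of $x^{a}y^{b}$, where, among all vertices except the initial vertex, $a$ is the number lying on or below the $x$-axis and $b$ the number lying above the $x$-axis. Then (1) $f(x,y)=\sum_{n\ge0}C_n\sum_{i=0}^{n}x^iy^{n-i}$; (2) $g(x,y)=\sum_{n\ge0}C_{n+1}\sum_{i=0}^{n}x^iy^{n-i}$; (3) $h(x,y)=\sum_{n\ge0}C_n\sum_{i=0}^{2n}x^iy^{2n-i}$.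
   Context: A step starts on or below (resp. above) the $x$-axis if its initial vertex has $y$-coordinate $\le 0$ (resp. $>0$); a vertex lies on or below (resp. above) the $x$-axis if its $y$-coordinate is $\le0$ (resp. $>0$). *)

From mathcomp Require Import all_boot all_order all_algebra.
Set Implicit Arguments. Unset Strict Implicit. Unset Printing Implicit Defensive.
Import Order.TTheory GRing.Theory Num.Theory.

(* A lattice path is a sequence of steps: true = up (1,1), false = down (1,-1). *)
Definition step (b : bool) : int := if b then 1%R else (-1)%R.

(* height of the k-th vertex (vertex 0 is the origin) *)
Definition height (s : seq bool) (k : nat) : int :=
  (\sum_(i < k) step (nth false s i))%R.

Definition in_P (n : nat) (s : seq bool) : bool :=
  (size s == 2 * n + 1) && (height s (size s) == 1%R).

(* step i starts at vertex i *)
Definition up_low (s : seq bool) : nat :=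
  count (fun i => nth false s i && (height s i <= 0)%R) (iota 0 (size s)).
Definition up_high (s : seq bool) : nat :=
  count (fun i => nth false s i && (0 < height s i)%R) (iota 0 (size s)).
Definition down_low (s : seq bool) : nat :=
  count (fun i => ~~ nth false s i && (height s i <= 0)%R) (iota 0 (size s)).
Definition down_high (s : seq bool) : nat :=
  count (fun i => ~~ nth false s i && (0 < height s i)%R) (iota 0 (size s)).
(* vertices other than the initial one: vertices 1 .. size s *)
Definition vert_low (s : seq bool) : nat :=
  count (fun k => (height s k <= 0)%R) (iota 1 (size s)).
Definition vert_high (s : seq bool) : nat :=
  count (fun k => (0 < height s k)%R) (iota 1 (size s)).

Definition cntF (n a b : nat) : nat :=
  #|[pred t : (2 * n + 1).-tuple bool | in_P n t && nth false t 0
        && (up_low t == a) && (up_high t == b)]|.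
Definition cntG (n a b : nat) : nat :=
  #|[pred t : (2 * n + 1).-tuple bool | in_P n t && ~~ nth false t 0
        && (down_low t == a) && (down_high t == b)]|.
Definition cntH (n a b : nat) : nat :=
  #|[pred t : (2 * n + 1).-tuple bool | in_P n t
        && (vert_low t == a) && (vert_high t == b)]|.

Definition catalan (n : nat) : nat := 'C(2 * n, n) %/ n.+1.

(* Bivariate formal power series over nat given as a sum over n of terms;
   a term is a coefficient function T n : nat -> nat -> nat (coefficient
   of x^a y^b). *)
Definition series := nat -> nat -> nat -> nat.

(* coefficient of x^a y^b in \sum_n T n is c (the partial sums stabilise) *)
Definition coef_is (T : series) (a b c : nat) : Prop :=
  exists N0, forall N, N0 <= N -> \sum_(n < N) T n a b = c.

Definition series_eq (T U : series) : Prop :=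
  forall a b, exists c, coef_is T a b c /\ coef_is U a b c.

Definition mulx (T : series) : series :=
  fun n a b => if a is a'.+1 then T n a' b else 0.
Definition muly (T : series) : series :=
  fun n a b => if b is b'.+1 then T n a b' else 0.

Definition termF : series := fun n a b =>
  catalan n * \sum_(i < n.+1) ((a == i) && (b == n - i)).
Definition termG : series := fun n a b =>
  catalan n.+1 * \sum_(i < n.+1) ((a == i) && (b == n - i)).
Definition termH : series := fun n a b =>
  catalan n * \sum_(i < (2 * n).+1) ((a == i) && (b == 2 * n - i)).

From mathcomp Require Import all_boot all_order all_algebra zify.
Set Implicit Arguments. Unset Strict Implicit. Unset Printing Implicit Defensive.
Import Order.TTheory GRing.Theory Num.Theory.

(* Fix a kind P of step (up steps, down steps, or all steps)
   and a path s of P(n,1,1). Order the vertices of s by height, breaking ties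
   by decreasing position. The rotation of s starting with step j is again in
   P(n,1,1), and its P-steps starting on or below the x-axis are those P-steps
   of s whose initial vertex is below vertex j in this order. As j runs over
   the P-steps of s, their number therefore runs bijectively over 1, ..., #P.
   Counting pairs (path, rotation), the paths starting with a P-step and having
   exactly a low P-steps, for any 1 <= a <= #P, number
   C(2n+1, n+1) / (2n+1) = C_n. The coefficients follow because low and high
   P-steps add up to #P, and because the vertices other than the origin lying
   on or below the axis are one fewer than the steps starting there (the
   origin is low, the endpoint is not). *)

Lemma count_nth_iota (T : Type) (x0 : T) (p : pred T) s :
  count (fun k => p (nth x0 s k)) (iota 0 (size s)) = count p s.
Proof. by rewrite -[in RHS](mkseq_nth x0 s) count_map. Qed.

Lemma count_iota_shift (p : pred nat) m n :
  count p (iota m n) = count (fun k => p (m + k)) (iota 0 n).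
Proof. by rewrite -[m in iota m]addn0 iotaDl count_map. Qed.

Lemma count_lt_sub (T : eqType) (a b : pred T) s x :
  subpred a b -> x \in s -> b x -> ~~ a x -> count a s < count b s.
Proof.
move=> sub_ab s_x bx Nax.
rewrite -[count b s]size_filter -(count_predC a) count_filter -addn1; apply: leq_add.
  by apply: sub_count => y ay; rewrite /= ay sub_ab.
suff: has (predC a) (filter b s) by rewrite has_count.
by apply/hasP; exists x; rewrite ?mem_filter ?bx.
Qed.

Lemma count_iota0 (p : pred nat) N : count p (iota 0 N) = \sum_(j < N) p j.
Proof.
rewrite -sum1_count big_mkcond -(subn0 N) -/(index_iota 0 N) big_mkord subn0.
by apply: eq_bigr => j _; case: (p j).
Qed.

Lemma card_predI_sum (T : finType) (A Q : pred T) : #|[predI A & Q]| = \sum_(t | A t) Q t.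
Proof. by rewrite -sum1_card big_mkcondr. Qed.

Lemma heightD s j k : height s (j + k) = (height s j + height (drop j s) k)%R.
Proof.
rewrite /height big_split_ord /=; congr (_ + _)%R.
by apply: eq_bigr => i _; rewrite nth_drop.
Qed.

Lemma height_take s j k : k <= j -> height (take j s) k = height s k.
Proof.
move=> le_kj; apply: eq_bigr => i _; rewrite nth_take //.
exact: leq_trans (ltn_ord i) le_kj.
Qed.

Lemma height_catl s1 s2 k : k <= size s1 -> height (s1 ++ s2) k = height s1 k.
Proof.
move=> le_k1; apply: eq_bigr => i _; rewrite nth_cat.
by rewrite (leq_trans (ltn_ord i) le_k1).
Qed.

Lemma height_catr s1 s2 k :
  height (s1 ++ s2) (size s1 + k) = (height s1 (size s1) + height s2 k)%R.
Proof. by rewrite heightD drop_size_cat // height_catl. Qed.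

Lemma height_size s : height s (size s) = (\sum_(x <- s) step x)%R.
Proof. by rewrite (big_nth false) big_mkord. Qed.

Lemma sum_step s : ((\sum_(x <- s) step x) + (size s)%:Z = 2 * (count id s)%:Z)%R.
Proof.
elim: s => [|x s IHs]; first by rewrite big_nil.
rewrite big_cons /=; move: IHs; set S := (\sum_(y <- s) step y)%R.
by case: x; rewrite /step; lia.
Qed.

Lemma in_P_count n s : in_P n s = (size s == 2 * n + 1) && (count id s == n.+1).
Proof.
rewrite /in_P height_size; case: eqP => //= size_s.
have := sum_step s; rewrite size_s.
move: (count id s) (\sum_(x <- s) step x)%R => c S eq_cS.
by apply/eqP/eqP; lia.
Qed.

Lemma in_P_rot n j s : in_P n (rot j s) = in_P n s.
Proof.
have /permP perm_rot_s : perm_eq (rot j s) s by rewrite perm_rot perm_refl.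
by rewrite !in_P_count size_rot perm_rot_s.
Qed.

Lemma height_rot_drop s j k : j <= size s -> k <= size s - j ->
  height (rot j s) k = (height s (j + k) - height s j)%R.
Proof.
move=> le_js le_k; rewrite height_catl ?size_drop // heightD.
by rewrite addrC addKr.
Qed.

Lemma height_rot_take s j k : j <= size s -> k <= j ->
  height (rot j s) (size s - j + k) = (height s (size s) - height s j + height s k)%R.
Proof.
move=> le_js le_kj; rewrite -(size_drop j s) height_catr height_take //.
by rewrite size_drop -{2}(subnKC le_js) heightD [(height s j + _)%R]addrC addrK.
Qed.

Definition low_steps (P : pred bool) s :=
  count (fun k => P (nth false s k) && (height s k <= 0)%R) (iota 0 (size s)).
Definition high_steps (P : pred bool) s :=
  count (fun k => P (nth false s k) && (0 < height s k)%R) (iota 0 (size s)).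

Lemma low_steps_add_high (P : pred bool) s : low_steps P s + high_steps P s = count P s.
Proof.
rewrite -(count_nth_iota false) -[in RHS]size_filter.
rewrite -(count_predC (fun k => height s k <= 0)%R).
by rewrite !count_filter; congr (_ + _); apply: eq_count => k; rewrite /= andbC // -ltNge.
Qed.

Lemma low_steps_gt0 (P : pred bool) s : 0 < size s -> P (nth false s 0) -> 0 < low_steps P s.
Proof.
move=> s_gt0 P_s0; rewrite -has_count; apply/hasP; exists 0; first by rewrite mem_iota.
by rewrite /= P_s0 /height big_ord0.
Qed.

Lemma low_steps_le (P : pred bool) s : low_steps P s <= count P s.
Proof. by rewrite -(low_steps_add_high P s) leq_addr. Qed.

Definition below s j m :=
  if j <= m then (height s m <= height s j)%R else (height s m < height s j)%R.

Definition below_count (P : pred bool) s j :=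
  count (fun m => P (nth false s m) && below s j m) (iota 0 (size s)).

Lemma below_refl s j : below s j j.
Proof. by rewrite /below leqnn lexx. Qed.

Lemma below_trans s j j' m : below s j' j -> below s j m -> below s j' m.
Proof.
rewrite /below; case: (leqP j m); case: (leqP j' j); case: (leqP j' m); lia.
Qed.

Lemma below_total s j m : m != j -> below s j m || below s m j.
Proof. by rewrite /below => /eqP; case: (leqP j m); case: (leqP m j); lia. Qed.

Lemma below_anti s j m : below s j m -> below s m j -> m = j.
Proof. by rewrite /below; case: (leqP j m); case: (leqP m j); lia. Qed.

(* Rotating at j lowers the heights by height s j, and by one less beyond the
   wrap-around point: hence the strict inequality for m < j in [below]. *)
Lemma low_steps_rot (P : pred bool) s j : j < size s -> height s (size s) = 1%R ->
  low_steps P (rot j s) = below_count P s j.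
Proof.
move=> lt_js hN; have le_js := ltnW lt_js.
rewrite /low_steps /below_count size_rot.
rewrite -{1}(subnK le_js) -{2}(subnKC le_js) !iotaD !count_cat !add0n addnC.
rewrite count_iota_shift [count _ (iota j _)]count_iota_shift.
congr (_ + _); apply: eq_in_count => k; rewrite mem_iota add0n => /andP[_ lt_k] /=.
- rewrite /rot nth_cat size_drop ltnNge leq_addr /= addKn nth_take //.
  rewrite height_rot_take ?(ltnW lt_k) // hN /below leqNgt lt_k /=.
  by congr (_ && _); apply/idP/idP; lia.
- rewrite /rot nth_cat size_drop lt_k nth_drop.
  by rewrite height_rot_drop ?(ltnW lt_k) // /below leq_addr subr_le0.
Qed.

Lemma below_count_le (P : pred bool) s j : below_count P s j <= count P s.
Proof. by rewrite -(count_nth_iota false); apply: sub_count => k /andP[]. Qed.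

Lemma below_count_gt0 (P : pred bool) s j :
  j < size s -> P (nth false s j) -> 0 < below_count P s j.
Proof.
move=> lt_js P_sj; rewrite -has_count; apply/hasP; exists j; first by rewrite mem_iota.
by rewrite /= P_sj below_refl.
Qed.

Lemma below_count_lt (P : pred bool) s j j' : j' < size s -> j != j' ->
  below s j' j -> P (nth false s j') -> below_count P s j < below_count P s j'.
Proof.
move=> lt_j's neq_jj' below_j P_sj'; apply: (count_lt_sub (x := j')).
- by move=> m /andP[-> /(below_trans below_j)].
- by rewrite mem_iota.
- by rewrite /= P_sj' below_refl.
by rewrite /= P_sj'; apply: contra neq_jj' => /(below_anti below_j) ->.
Qed.

(* The cycle lemma: on the P-steps, [below_count P s] is injective with values
   in [1, count P s], hence a bijection onto that interval. *)
Lemma cycle_lemma (P : pred bool) s a : 0 < a <= count P s ->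
  count (fun j => P (nth false s j) && (below_count P s j == a)) (iota 0 (size s)) = 1.
Proof.
move=> /andP[a_gt0 le_a].
set J := filter (fun j => P (nth false s j)) (iota 0 (size s)).
have inj_J : {in J &, injective (below_count P s)}.
  move=> j j'; rewrite !mem_filter !mem_iota /=.
  move=> /andP[P_sj lt_js] /andP[P_sj' lt_j's] eq_jj'.
  apply/eqP; apply: contraT => neq_jj'.
  have neq_j'j : j' != j by rewrite eq_sym.
  case/orP: (below_total s neq_jj') => [below_j | below_j'].
    by have := below_count_lt lt_j's neq_jj' below_j P_sj'; rewrite eq_jj' ltnn.
  by have := below_count_lt lt_js neq_j'j below_j' P_sj; rewrite eq_jj' ltnn.
have uniq_L : uniq (map (below_count P s) J).
  by rewrite map_inj_in_uniq // filter_uniq ?iota_uniq.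
have sub_L : {subset map (below_count P s) J <= iota 1 (count P s)}.
  move=> x /mapP[j]; rewrite mem_filter mem_iota => /andP[P_sj /andP[_ lt_js]] ->.
  by rewrite mem_iota add1n ltnS below_count_le below_count_gt0.
have [|_ eq_L] := uniq_min_size uniq_L sub_L.
  by rewrite size_iota size_map size_filter count_nth_iota.
have : count_mem a (map (below_count P s) J) = 1.
  by rewrite count_uniq_mem // eq_L mem_iota add1n ltnS a_gt0 le_a.
by rewrite count_map count_filter => <-; apply: eq_count => j; rewrite /= andbC.
Qed.

Lemma count_rot_low_steps (P : pred bool) s a :
  height s (size s) = 1%R -> 0 < a <= count P s ->
  count (fun j => P (nth false (rot j s) 0) && (low_steps P (rot j s) == a))
        (iota 0 (size s)) = 1.
Proof.
move=> hN range_a; rewrite -(cycle_lemma range_a); apply: eq_in_count => j.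
rewrite mem_iota => /andP[_ lt_js] /=.
by rewrite low_steps_rot // /rot nth_cat size_drop subn_gt0 lt_js nth_drop addn0.
Qed.

Lemma sum_count_rot (T : finType) N (A Q : pred (N.-tuple T)) :
  (forall j t, A (rot_tuple j t) = A t) ->
  \sum_(t | A t) count (fun j => Q (rot_tuple j t)) (iota 0 N) = N * #|[predI A & Q]|.
Proof.
move=> A_rot; under eq_bigr do rewrite count_iota0.
rewrite exchange_big /= -[N in N * _]card_ord -sum_nat_const; apply: eq_bigr => j _.
have rot_inj : injective (@rot_tuple N j T) by move=> t1 t2 /(congr1 val) /rot_inj /val_inj.
by rewrite card_predI_sum [RHS](reindex_inj rot_inj); apply: eq_bigl => t; rewrite A_rot.
Qed.

Lemma card_count_tuples m k : #|[pred t : m.-tuple bool | count id t == k]| = 'C(m, k).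
Proof.
pose f (A : {set 'I_m}) := [tuple i \in A | i < m].
have f_bij : bijective f.
  exists (fun t => [set i | tnth t i]) => [A | t].
    by apply/setP => i; rewrite inE tnth_mktuple.
  by apply: eq_from_tnth => i; rewrite tnth_mktuple inE.
have count_f A : count id (f A) = #|A|.
  rewrite /= count_map cardE /enum_mem size_filter count_filter.
  by apply: eq_count => i; rewrite /= andbT.
rewrite -[in RHS](card_ord m) -card_draws -!sum1_card (reindex f (onW_bij _ f_bij)).
by apply: eq_bigl => A; rewrite !inE count_f.
Qed.

Lemma card_in_P n : #|[pred t : (2 * n + 1).-tuple bool | in_P n t]| = 'C(2 * n + 1, n.+1).
Proof.
by rewrite -card_count_tuples; apply: eq_card => t; rewrite !inE in_P_count size_tuple eqxx.
Qed.

Lemma eq_catalan n c : c * (2 * n + 1) = 'C(2 * n + 1, n.+1) -> c = catalan n.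
Proof.
move=> c_bin; have := mul_bin_diag (2 * n + 1) n.
rewrite addn1 /= -addn1 -c_bin mulnC mulnA => /eqP.
by rewrite eqn_mul2r addn1 /= /catalan => /eqP ->; rewrite mulnC mulnK.
Qed.

Lemma card_low_steps n (P : pred bool) M a :
  (forall t : (2 * n + 1).-tuple bool, in_P n t -> count P t = M) ->
  #|[pred t : (2 * n + 1).-tuple bool
        | in_P n t && P (nth false t 0) && (low_steps P t == a)]|
  = if 0 < a <= M then catalan n else 0.
Proof.
move=> count_P; set N := 2 * n + 1.
case: ifP => [range_a | out_a].
  apply: eq_catalan; rewrite -card_in_P.
  pose A (t : N.-tuple bool) := in_P n t.
  pose Q (t : N.-tuple bool) := P (nth false t 0) && (low_steps P t == a).
  rewrite (@eq_card _ _ [predI A & Q]); last by move=> t; rewrite !inE andbA.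
  rewrite mulnC -sum_count_rot => [|j t]; last exact: in_P_rot.
  rewrite -sum1_card; apply: eq_bigr => t in_P_t.
  rewrite -[N in iota 0 N](size_tuple t) count_rot_low_steps ?count_P //.
  by case/andP: in_P_t => _ /eqP.
apply: eq_card0 => t; rewrite !inE; apply/negP => /andP[/andP[in_P_t P_t0] /eqP low_a].
move: out_a; rewrite -low_a -(count_P t in_P_t) low_steps_le low_steps_gt0 //.
by rewrite size_tuple /N addn1.
Qed.

Lemma count_up n s : in_P n s -> count id s = n.+1.
Proof. by rewrite in_P_count => /andP[_ /eqP]. Qed.

Lemma count_down n s : in_P n s -> count negb s = n.
Proof.
move=> in_P_s; have := count_predC id s; rewrite (count_up in_P_s).
move: in_P_s; rewrite in_P_count -[count negb s]/(count (predC id) s).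
by case/andP => /eqP -> _; lia.
Qed.

Lemma vert_low_add_high s : vert_low s + vert_high s = size s.
Proof.
rewrite -[size s](size_iota 1) -(count_predC (fun k => height s k <= 0)%R).
by congr (_ + _); apply: eq_count => k; rewrite /= -ltNge.
Qed.

Lemma low_steps_vert s : height s (size s) = 1%R -> 0 < size s ->
  low_steps predT s = (vert_low s).+1.
Proof.
case: s => // x s hN _; rewrite /low_steps /vert_low.
move: hN; set n := size s; rewrite -[size _]/n.+1 => hN.
have -> : iota 1 n.+1 = iota 1 n ++ [:: n.+1] by rewrite -[X in iota 1 X]addn1 iotaD.
by rewrite count_cat /= hN /height big_ord0 /= !addn0 add1n.
Qed.

Lemma card_fiber_pair (T : finType) (A : pred T) (L H : T -> nat) K a b :
  (forall t, A t -> L t + H t = K) ->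
  #|[pred t | A t && (L t == a) && (H t == b)]|
  = if a + b == K then #|[pred t | A t && (L t == a)]| else 0.
Proof.
move=> sum_LH; case: eqP => [sum_ab | neq_abK].
  apply: eq_card => t; rewrite !inE; case At: (A t); case: eqP => //= La.
  by apply/eqP; have := sum_LH t At; lia.
apply: eq_card0 => t; rewrite !inE; apply/negP => /andP[/andP[At /eqP La] /eqP Hb].
by apply: neq_abK; rewrite -La -Hb sum_LH.
Qed.

Lemma sum_diag m (a b : nat) : \sum_(i < m.+1) ((a == i) && (b == m - i)) = (a + b == m).
Proof.
case: (ltnP m a) => [lt_ma | le_am].
  rewrite big1 => [|i _]; first by apply/esym/eqP; lia.
  by case: eqP => // a_i; move: (ltn_ord i); rewrite -a_i; lia.
rewrite (bigD1 (Ordinal (le_am : a < m.+1))) //= eqxx big1 => [|i /eqP neq_ia].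
  by rewrite addn0 /=; congr (nat_of_bool _); apply/eqP/eqP; lia.
by case: eqP => // a_i; case: neq_ia; apply: val_inj.
Qed.

Lemma mulx_diag_coef c m (a b : nat) :
  (if a + b == m.+1 then (if 0 < a <= m.+1 then c else 0) else 0)
  = if a is a'.+1 then c * \sum_(i < m.+1) ((a' == i) && (b == m - i)) else 0.
Proof.
case: a => [|a]; first by case: ifP.
rewrite sum_diag addSn eqSS; case: eqP => [sum_ab | _]; last by rewrite muln0.
by rewrite muln1 ifT //; lia.
Qed.

Lemma cntF_eq n a b : cntF n a b = mulx termF n a b.
Proof.
pose L (t : (2 * n + 1).-tuple bool) := up_low t.
pose H (t : (2 * n + 1).-tuple bool) := up_high t.
rewrite /cntF (card_fiber_pair (L := L) (H := H) (K := n.+1)); last first.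
  by move=> t /andP[in_P_t _]; rewrite -(count_up in_P_t) -(low_steps_add_high id).
rewrite (card_low_steps (P := id) (M := n.+1)) => [|t /count_up //].
exact: mulx_diag_coef.
Qed.

Lemma cntG_val n a b :
  cntG n a b = if a + b == n then (if 0 < a <= n then catalan n else 0) else 0.
Proof.
pose L (t : (2 * n + 1).-tuple bool) := down_low t.
pose H (t : (2 * n + 1).-tuple bool) := down_high t.
rewrite /cntG (card_fiber_pair (L := L) (H := H) (K := n)); last first.
  by move=> t /andP[in_P_t _]; rewrite -(count_down in_P_t) -(low_steps_add_high negb).
by rewrite (card_low_steps (P := negb) (M := n)) => // t /count_down.
Qed.

Lemma cntG0 a b : cntG 0 a b = 0.
Proof. by rewrite cntG_val; case: ifP => //; case: a. Qed.

Lemma cntG_eq n a b : cntG n.+1 a b = mulx termG n a b.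
Proof. by rewrite cntG_val; apply: mulx_diag_coef. Qed.

Lemma card_vert_low n a :
  #|[pred t : (2 * n + 1).-tuple bool | in_P n t && (vert_low t == a)]|
  = if a < 2 * n + 1 then catalan n else 0.
Proof.
rewrite -[a < _]/(0 < a.+1 <= 2 * n + 1).
rewrite -(card_low_steps (P := predT) (M := 2 * n + 1)) => [|t _]; last first.
  by rewrite count_predT size_tuple.
apply: eq_card => t; rewrite !inE /=; case in_P_t: (in_P n t) => //=.
move: in_P_t; rewrite /in_P => /andP[_ /eqP hN].
by rewrite low_steps_vert // size_tuple addn1.
Qed.

Lemma cntH_eq n a b : cntH n a b = muly termH n a b.
Proof.
pose L (t : (2 * n + 1).-tuple bool) := vert_low t.
pose H (t : (2 * n + 1).-tuple bool) := vert_high t.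
rewrite /cntH (card_fiber_pair (L := L) (H := H) (K := 2 * n + 1)); last first.
  by move=> t _; rewrite /L /H vert_low_add_high size_tuple.
rewrite card_vert_low /muly /termH; case: b => [|b].
  by rewrite addn0; case: eqP => // ->; rewrite ltnn.
rewrite sum_diag addnS addn1 eqSS; case: eqP => [sum_ab | _]; last by rewrite muln0.
by rewrite muln1 ifT //; lia.
Qed.

Definition eventually_zero (T : series) :=
  forall a b, exists K, forall n, K <= n -> T n a b = 0.

Lemma eventually_zero_diag (T : series) :
  (forall n a b, a + b < n -> T n a b = 0) -> eventually_zero T.
Proof. by move=> T0 a b; exists (a + b).+1 => n; apply: T0. Qed.

Lemma sum_eventually_zero (T : series) a b K N :
  (forall n, K <= n -> T n a b = 0) -> K <= N ->
  \sum_(n < N) T n a b = \sum_(n < K) T n a b.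
Proof.
move=> T0 le_KN; rewrite -(subnKC le_KN) big_split_ord /= [X in _ + X]big1 ?addn0 // => i _.
by apply: T0; rewrite leq_addr.
Qed.

Lemma series_eq_shift k (T U : series) :
  (forall n a b, n < k -> T n a b = 0) -> (forall n a b, T (k + n) a b = U n a b) ->
  eventually_zero U -> series_eq T U.
Proof.
move=> T0 TU U0 a b; have [K UK] := U0 a b.
exists (\sum_(n < K) U n a b); split; last by exists K => N; apply: sum_eventually_zero.
exists (k + K) => N le_N; rewrite -(subnKC (leq_trans (leq_addr K k) le_N)).
rewrite big_split_ord /= big1 => [|i _]; last exact: T0.
rewrite add0n; under eq_bigr do rewrite TU.
by apply: sum_eventually_zero UK _; lia.
Qed.

Theorem theorem10 :
  series_eq cntF (mulx termF) /\
  series_eq cntG (mulx termG) /\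
  series_eq cntH (muly termH).
Proof.
have zero_diag m (a b : nat) : a + b < m -> \sum_(i < m.+1) ((a == i) && (b == m - i)) = 0.
  by move=> lt_abm; rewrite sum_diag; case: eqP => //; lia.
split; [|split].
- apply: (@series_eq_shift 0 cntF) => [//|n a b|]; first exact: cntF_eq.
  apply: eventually_zero_diag => n [|a] b //= lt_abn.
  by rewrite /termF zero_diag ?muln0 //; lia.
- apply: (@series_eq_shift 1 cntG) => [[|//] a b _|n a b|]; [exact: cntG0 | exact: cntG_eq |].
  apply: eventually_zero_diag => n [|a] b //= lt_abn.
  by rewrite /termG zero_diag ?muln0 //; lia.
- apply: (@series_eq_shift 0 cntH) => [//|n a b|]; first exact: cntH_eq.
  apply: eventually_zero_diag => n a [|b] //= lt_abn.
  by rewrite /termH zero_diag ?muln0 //; lia.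
Qed.
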